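(* Let $H=(V,E)$ be a $k$-uniform hypergraph and $U\subseteq V$ such that every edge of the projected hypergraph $H[U]$ has size at most two. Then, over the polynomial ring over $\mathrm{GF}(2^m)$ (any $m\geq1$) in the variables $s$ and $\{v_e\}_{e\in E}$, $$\det(\mathbf{T}^{(s)}(H,U))=\sum_{M\in\mathcal{M}}s^{\Lambda(M)}\prod_{e\in M}v_e^{p(e)},$$ where $\mathcal{M}$ is the set of all perfect matchings of $H[U]$, $\Lambda(M)$ is the number of loops in $M$, and $p(e)=1$ if $e$ is a loop and $p(e)=2$ otherwise.
   Context: A hypergraph $H=(V,E)$ has a finite vertex set $V$ and a multiset $E$ of subsets of $V$; $k$-uniform means all edges have size $k$. For $U\subseteq V$, the projected hypergraph $H[U]$ has one edge $e\cap U$ for each $e\in E$. An edge $e$ is a loop (at $i$) if $e\cap U=\{i\}$. Each $e\in E$ has a variable $v_e$. The Tutte matrix of index $s$, $\mathbf{T}^{(s)}(H,U)$, is the $|U|\times|U|$ matrix with rows and columns indexed by $U$, with $\mathbf{T}_{i,j}=\sum v_e$ over all $e\in E$ with $e\cap U=\{i,j\}$ for $i\neq j$, and $\mathbf{T}_{i,i}=s\sum v_e$ over all $e\in E$ with $e\cap U=\{i\}$. A perfect matching of $H[U]$ is a set $M\subseteq E$ of edges (multiset occurrences distinct) with nonempty projections on $U$ that are pairwise disjoint and cover $U$; a loop covers its single vertex. *)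

From HB Require Import structures.
From mathcomp Require Import all_boot all_order all_algebra all_field.
From mathcomp Require Import mpoly.
Set Implicit Arguments. Unset Strict Implicit. Unset Printing Implicit Defensive.
Import GRing.Theory.
Local Open Scope ring_scope.

(* A hypergraph H = (V, E): vertices form the finite type V, the edge multiset
   is given by a finite index type E of edge occurrences and a map
   edge : E -> {set V} (so repeated edges are distinct occurrences). *)

Section Tutte.
Variables (F : comNzRingType) (V E : finType) (edge : E -> {set V}) (U : {set V}).

Definition nvars := #|E|.+1.
Definition var_s : {mpoly F[nvars]} := 'X_ord0.
Definition var_v (e : E) : {mpoly F[nvars]} := 'X_(lift ord0 (enum_rank e)).

Definition proj (e : E) : {set V} := edge e :&: U.
Definition is_loop (e : E) : bool := #|proj e| == 1%N.

Definition uvert (i : 'I_#|U|) : V := enum_val i.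

Definition tutte_matrix : 'M[{mpoly F[nvars]}]_#|U| :=
  \matrix_(i, j)
    if i != j then \sum_(e : E | proj e == [set uvert i; uvert j]) var_v e
    else var_s * \sum_(e : E | proj e == [set uvert i]) var_v e.

Definition perfect_matching (M : {set E}) : bool :=
  [&& [forall e in M, proj e != set0],
      [forall e1 in M, forall e2 in M, (e1 != e2) ==> [disjoint proj e1 & proj e2]]
    & \bigcup_(e in M) proj e == U].

Definition nloops (M : {set E}) : nat := #|[set e in M | is_loop e]|.
Definition pexp (e : E) : nat := if is_loop e then 1%N else 2%N.

End Tutte.

From HB Require Import structures.
From mathcomp Require Import all_boot all_order all_algebra all_field.
From mathcomp Require Import mpoly fingroup perm.
Set Implicit Arguments.
Unset Strict Implicit.
Unset Printing Implicit Defensive.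

Import GRing.Theory.
Local Open Scope ring_scope.

(* In characteristic 2 the signs in the Leibniz expansion disappear, so for the
   symmetric Tutte matrix the terms of a permutation and of its inverse cancel,
   leaving only involutions s.  Expanding each entry as a sum over edges, the
   edge choices f that are not constant on the 2-cycles of s cancel in pairs
   as well.  When every projected edge has at most two vertices, the surviving
   pairs (s, f) are in bijection with the perfect matchings of H[U] via the
   image of f; a loop (fixed point of s) contributes s v_e and a 2-cycle
   contributes v_e^2.  Neither the uniformity of H nor the exponent m plays a
   role: only 2 = 0 in the coefficient field is used. *)

Section Char2Sums.
Variable R : comNzRingType.
Hypothesis two0 : 2%:R = 0 :> R.

Lemma sum_involution_pchar2 (T : finType) (g : T -> T) (P : pred T) (F : T -> R) :
  (forall x, P x -> P (g x)) -> (forall x, P x -> g (g x) = x) ->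
  (forall x, P x -> g x != x) -> (forall x, P x -> F (g x) = F x) ->
  \sum_(x | P x) F x = 0.
Proof.
move=> Pg gK gx Fg.
have rank_neq x : P x -> (enum_rank x : nat) != enum_rank (g x).
  by move=> Px; rewrite val_eqE (inj_eq enum_rank_inj) eq_sym gx.
(* Split the orbits {x, g x} by which of the two points has the smaller rank. *)
pose lo x := (enum_rank x < enum_rank (g x))%N.
rewrite (bigID lo) /=; set S := \sum_(x | P x && lo x) F x.
suff -> : \sum_(x | P x && ~~ lo x) F x = S by rewrite -mulr2n -mulr_natr two0 mulr0.
rewrite (reindex_onto g g); last by move=> x /andP[Px _]; rewrite gK.
apply: eq_big => x; last first.
  by case/andP=> /andP[Pgx _] /eqP gKx; rewrite -{2}gKx (Fg (g x)).
apply/idP/idP => [/andP[/andP[Pgx hi] /eqP gKx]|/andP[Px hlo]].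
  have Px : P x by rewrite -gKx Pg.
  move: hi; rewrite /lo gKx -leqNgt leq_eqVlt (negPf (rank_neq _ Px)).
  by rewrite Px.
by rewrite Pg // gK // eqxx andbT /lo gK // -leqNgt ltnW.
Qed.

Lemma det_sym_pchar2 (n : nat) (A : 'M[R]_n) : (forall i j, A i j = A j i) ->
  \det A = \sum_(s : 'S_n | (s^-1 == s)%g) \prod_i A i (s i).
Proof.
move=> Asym; have m1 : -1 = 1 :> R.
  by apply/esym/eqP; rewrite -addr_eq0 -mulr2n two0.
rewrite /determinant; under eq_bigr => s _ do rewrite m1 expr1n mul1r.
rewrite (bigID (fun s : 'S_n => (s^-1 == s)%g)) /=.
rewrite [X in _ + X](@sum_involution_pchar2 _ (fun s => s^-1)%g) ?addr0 //.
- by move=> s; rewrite invgK eq_sym.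
- by move=> s _; rewrite invgK.
- move=> s _; rewrite (reindex_inj (@perm_inj _ s)) /=.
  by apply: eq_bigr => i _; rewrite permK Asym.
Qed.

Definition precomp (n : nat) (T : finType) (s : 'S_n) (f : {ffun 'I_n -> T}) :
  {ffun 'I_n -> T} := [ffun i => f (s i)].

Lemma prod_sum_involution_pchar2 (n : nat) (T : finType) (P : 'I_n -> 'I_n -> pred T)
    (w : 'I_n -> 'I_n -> T -> R) (s : 'S_n) :
  (forall i j, P i j =1 P j i) -> (forall i j, w i j =1 w j i) ->
  (s^-1 == s)%g ->
  \prod_i \sum_(t | P i (s i) t) w i (s i) t =
  \sum_(f in family (fun i => P i (s i)) | precomp s f == f)
     \prod_i w i (s i) (f i).
Proof.
move=> Psym wsym /eqP sV; have sK i : s (s i) = i by rewrite -{1}sV permK.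
rewrite bigA_distr_big_dep (bigID (fun f => precomp s f == f)) /=.
rewrite [X in _ + X](@sum_involution_pchar2 _ (precomp s)) ?addr0 //.
- move=> f /andP[/familyP fam nf]; apply/andP; split.
    apply/familyP => i; rewrite ffunE; move: (fam (s i)).
    by rewrite sK -!topredE /= Psym.
  apply: contra nf => /eqP/ffunP fs; apply/eqP/ffunP => i.
  by move: (fs (s i)); rewrite !ffunE !sK.
- by move=> f _; apply/ffunP => i; rewrite !ffunE sK.
- by move=> f /andP[].
- move=> f _; rewrite (reindex_inj (@perm_inj _ s)) /=.
  by apply: eq_bigr => i _; rewrite ffunE sK wsym.
Qed.

End Char2Sums.

Lemma set2_inj (T : finType) (a b c : T) : [set a; b] = [set a; c] -> b = c.
Proof.
move=> eq_abc; have : b \in [set a; c] by rewrite -eq_abc set22.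
rewrite in_set2 => /orP[/eqP ba|/eqP //].
have : c \in [set a; b] by rewrite eq_abc set22.
by rewrite ba setUid in_set1 => /eqP.
Qed.

Lemma card_le2_set2 (T : finType) (A : {set T}) x :
  (#|A| <= 2)%N -> x \in A -> exists y, A = [set x; y].
Proof.
move=> A_le2 Ax; rewrite -(setD1K Ax).
have : (#|A :\ x| <= 1)%N by move: A_le2; rewrite (cardsD1 x) Ax.
rewrite leq_eqVlt ltnS leqn0 => /orP[/cards1P[y ->]|/eqP/cards0_eq ->].
  by exists y.
by exists x; rewrite setUid setU0.
Qed.

Section TutteExpansion.
Variables (F : comNzRingType) (V E : finType) (edge : E -> {set V}) (U : {set V}).
Local Notation n := #|U|.
Local Notation R := {mpoly F[nvars E]}.
Local Notation u := (@uvert V U).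
Local Notation pj := (proj edge U).
Local Notation T := (tutte_matrix F edge U).

Definition tutte_edge (i j : 'I_n) (e : E) : bool := pj e == [set u i; u j].

Definition tutte_weight (i j : 'I_n) (e : E) : R :=
  if i == j then var_s F E * var_v F e else var_v F e.

Lemma tutte_matrixE i j : T i j = \sum_(e | tutte_edge i j e) tutte_weight i j e.
Proof.
rewrite /tutte_matrix mxE /tutte_edge /tutte_weight.
by case: eqVneq => [->|//]; rewrite setUid mulr_sumr.
Qed.

Lemma tutte_matrix_sym i j : T i j = T j i.
Proof.
rewrite !tutte_matrixE; apply: eq_big => e; first by rewrite /tutte_edge setUC.
by rewrite /tutte_weight eq_sym.
Qed.

Definition matching_term (p : 'S_n * {ffun 'I_n -> E}) : bool :=
  [&& (p.1^-1 == p.1)%g, p.2 \in family (fun i => tutte_edge i (p.1 i))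
    & precomp p.1 p.2 == p.2].

Definition term_weight (p : 'S_n * {ffun 'I_n -> E}) : R :=
  \prod_i tutte_weight i (p.1 i) (p.2 i).

Lemma det_tutte_terms : 2%:R = 0 :> F ->
  \det T = \sum_(p | matching_term p) term_weight p.
Proof.
move=> two0; have two0R : 2%:R = 0 :> R by rewrite -mpolyC_nat two0 mpolyC0.
have edge_sym i j : tutte_edge i j =1 tutte_edge j i.
  by move=> e; rewrite /tutte_edge setUC.
have weight_sym i j : tutte_weight i j =1 tutte_weight j i.
  by move=> e; rewrite /tutte_weight eq_sym.
rewrite (det_sym_pchar2 two0R tutte_matrix_sym).
under eq_bigr => s sV.
  under eq_bigr => i _ do rewrite tutte_matrixE.
  rewrite (prod_sum_involution_pchar2 two0R edge_sym weight_sym sV).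
  over.
by rewrite pair_big_dep.
Qed.

Lemma uvert_inj : injective u.
Proof. exact: enum_val_inj. Qed.

Lemma uvertP x : x \in U -> exists i, u i = x.
Proof. by move=> Ux; exists (enum_rank_in Ux x); rewrite /uvert enum_rankK_in. Qed.

Lemma proj_sub e : pj e \subset U.
Proof. exact: subsetIr. Qed.

Section MatchingTerm.
Variable p : 'S_n * {ffun 'I_n -> E}.
Hypothesis p_term : matching_term p.
Local Notation s := p.1.
Local Notation f := p.2.

Lemma term_proj i : pj (f i) = [set u i; u (s i)].
Proof. by case/and3P: p_term => _ /familyP/(_ i) /eqP. Qed.

Lemma term_edge_inv i : f (s i) = f i.
Proof. by case/and3P: p_term => _ _ /eqP/ffunP/(_ i); rewrite ffunE. Qed.

Lemma term_vertex i j : u j \in pj (f i) -> j = i \/ j = s i.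
Proof. by rewrite term_proj in_set2 => /orP[] /eqP/uvert_inj ->; [left|right]. Qed.

Lemma term_edge_vertex i j : u j \in pj (f i) -> f j = f i.
Proof. by case/term_vertex => ->; rewrite ?term_edge_inv. Qed.

Lemma term_is_loop i : is_loop edge U (f i) = (i == s i).
Proof. by rewrite /is_loop term_proj cards2 (inj_eq uvert_inj); case: (i == s i). Qed.

Lemma term_fiber i : [pred j | f j == f i] =i [set i; s i].
Proof.
move=> j; rewrite in_set2 inE; apply/eqP/orP => [fji|].
  have : u j \in pj (f i) by rewrite -fji term_proj set21.
  by case/term_vertex => ->; [left|right].
by case=> /eqP ->; rewrite ?term_edge_inv.
Qed.

End MatchingTerm.

Definition term_image (p : 'S_n * {ffun 'I_n -> E}) : {set E} :=
  [set p.2 i | i in 'I_n].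

Lemma term_image_perfect_matching p :
  matching_term p -> perfect_matching edge U (term_image p).
Proof.
move=> tp; apply/and3P; split.
- apply/forallP => e; apply/implyP => /imsetP[i _ ->].
  by apply/set0Pn; exists (u i); rewrite (term_proj tp) set21.
- apply/forallP => e1; apply/implyP => /imsetP[i _ ->].
  apply/forallP => e2; apply/implyP => /imsetP[j _ ->].
  apply/implyP; apply: contraR => /pred0Pn[x /andP[xi xj]].
  have [k ukx] := uvertP (subsetP (proj_sub _) x xi).
  rewrite -ukx in xi xj.
  by rewrite -(term_edge_vertex tp xi) -(term_edge_vertex tp xj).
- apply/eqP/setP => x; apply/bigcupP/idP => [[e _ /(subsetP (proj_sub e))] //|].
  case/uvertP=> k <-; exists (p.2 k); first exact: imset_f.
  by rewrite (term_proj tp) set21.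
Qed.

Lemma term_image_inj p q : matching_term p -> matching_term q ->
  term_image p = term_image q -> p = q.
Proof.
move=> tp tq im_pq.
have ef i : p.2 i = q.2 i.
  have : p.2 i \in term_image q by rewrite -im_pq imset_f.
  case/imsetP => j _ eij.
  have ui : u i \in pj (q.2 j) by rewrite -eij (term_proj tp) set21.
  by rewrite eij (term_edge_vertex tq ui).
have es i : p.1 i = q.1 i.
  by apply/uvert_inj/(@set2_inj _ (u i)); rewrite -(term_proj tp) -(term_proj tq) ef.
by case: p q {tp tq im_pq} ef es => [s f] [t g] /= ef es; congr pair;
  [apply/permP | apply/ffunP].
Qed.

Lemma perfect_matching_edge_uniq M e1 e2 x : perfect_matching edge U M ->
  e1 \in M -> e2 \in M -> x \in pj e1 -> x \in pj e2 -> e1 = e2.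
Proof.
case/and3P=> _ /forall_inP/(_ e1) disjM _ M1 M2 x1 x2; apply/eqP/contraT => ne12.
move/forall_inP/(_ e2 M2): (disjM M1); rewrite ne12 => /disjointFr/(_ x1).
by rewrite x2.
Qed.

Lemma perfect_matching_term M : (forall e, #|pj e| <= 2)%N ->
  perfect_matching edge U M -> exists2 p, matching_term p & term_image p = M.
Proof.
move=> small PM; have uniqM := perfect_matching_edge_uniq PM.
case/and3P: PM => /forall_inP nonempty _ /eqP coverM.
have cover i : exists e, (e \in M) && (u i \in pj e).
  have : u i \in \bigcup_(e in M) pj e by rewrite coverM enum_valP.
  by case/bigcupP=> e Me ue; exists e; rewrite Me ue.
have [f0 f0P] := fin_all_exists cover; pose f := [ffun i => f0 i].
have fM i : f i \in M by rewrite ffunE; case/andP: (f0P i).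
have fu i : u i \in pj (f i) by rewrite ffunE; case/andP: (f0P i).
have partner i : exists j, pj (f i) = [set u i; u j].
  have [y fiy] := card_le2_set2 (small (f i)) (fu i).
  have /uvertP[j uj] : y \in U by apply: (subsetP (proj_sub (f i))); rewrite fiy set22.
  by exists j; rewrite fiy uj.
have [s0 s0P] := fin_all_exists partner.
have f_s0 i : f (s0 i) = f i.
  by apply: (uniqM _ _ (u (s0 i))); rewrite ?fM ?fu // s0P set22.
have s0K : involutive s0.
  move=> i; apply/uvert_inj/(@set2_inj _ (u (s0 i))).
  by rewrite -s0P f_s0 s0P setUC.
pose s := perm (can_inj s0K); have sE i : s i = s0 i by rewrite permE.
exists (s, f).
  apply/and3P; split => /=.
  - by apply/eqP/permP => i; apply: (@perm_inj _ s); rewrite permKV !sE s0K.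
  - by apply/familyP => i; rewrite -topredE /= /tutte_edge sE s0P.
  - by apply/eqP/ffunP => i; rewrite ffunE sE f_s0.
apply/setP => e; apply/imsetP/idP => [[i _ ->] //|Me].
have [x xe] := set0Pn _ (nonempty e Me).
have [k ukx] := uvertP (subsetP (proj_sub e) x xe).
by exists k => //; apply: (uniqM _ _ x); rewrite ?fM // -ukx ?fu.
Qed.

Definition matching_weight (M : {set E}) : R :=
  var_s F E ^+ nloops edge U M * \prod_(e in M) var_v F e ^+ pexp edge U e.

Lemma term_nloops p : matching_term p ->
  nloops edge U (term_image p) = #|[set i | i == p.1 i]|.
Proof.
move=> tp; rewrite /nloops; have -> : [set e in term_image p | is_loop edge U e] =
    p.2 @: [set i | i == p.1 i].
  apply/setP => e; rewrite inE; apply/andP/imsetP.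
    by case=> /imsetP[i _ ->]; rewrite (term_is_loop tp) => fixi; exists i; rewrite ?inE.
  by case=> i; rewrite inE => fixi ->; rewrite imset_f ?(term_is_loop tp).
apply: card_in_imset => i j; rewrite !inE => /eqP fixi _ fij.
by move: (term_fiber tp i j); rewrite !inE fij eqxx -fixi orbb => /esym/eqP.
Qed.

Lemma term_weightE p : matching_term p -> term_weight p = matching_weight (term_image p).
Proof.
move=> tp; have loop_factor i : tutte_weight i (p.1 i) (p.2 i) =
    (if i == p.1 i then var_s F E else 1) * var_v F (p.2 i).
  by rewrite /tutte_weight; case: (i == p.1 i); rewrite ?mul1r.
rewrite /term_weight (eq_bigr _ (fun i _ => loop_factor i)) big_split /=.
congr (_ * _).
  rewrite -big_mkcond /= term_nloops // -prodr_const.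
  by apply: eq_bigl => i; rewrite inE.
rewrite (partition_big p.2 (mem (term_image p))) => [|i _]; last exact: imset_f.
apply: eq_bigr => _ /imsetP[j _ ->].
rewrite (eq_bigr (fun _ => var_v F (p.2 j))) => [|i /eqP ->] //.
rewrite prodr_const (eq_card (term_fiber tp j)) cards2 /pexp (term_is_loop tp).
by case: (j == p.1 j).
Qed.

Lemma det_tutte_matchings : 2%:R = 0 :> F -> (forall e, #|pj e| <= 2)%N ->
  \det T = \sum_(M | perfect_matching edge U M) matching_weight M.
Proof.
move=> two0 small; rewrite det_tutte_terms // (eq_bigr _ (fun p => @term_weightE p)).
rewrite (partition_big term_image (perfect_matching edge U)) /=; last first.
  exact: term_image_perfect_matching.
apply: eq_bigr => M PM; have [p0 tp0 <-] := perfect_matching_term small PM.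
rewrite (big_pred1 p0) // => q /=; apply/andP/eqP => [[tq /eqP]|->//].
exact: term_image_inj.
Qed.

End TutteExpansion.

Theorem lemma4p2 (F : finFieldType) (m : nat) (V E : finType)
    (edge : E -> {set V}) (k : nat) (U : {set V}) :
  (0 < m)%N -> #|F| = (2 ^ m)%N ->
  (forall e : E, #|edge e| = k) ->
  (forall e : E, (#|edge e :&: U| <= 2)%N) ->
  \det (tutte_matrix F edge U) =
  \sum_(M : {set E} | perfect_matching edge U M)
     var_s F E ^+ nloops edge U M *
     \prod_(e in M) var_v F e ^+ pexp edge U e.
Proof.
move=> _ cardF _ small.
have two0 : 2%:R = 0 :> F.
  by apply: pcharf0; apply: (card_finPcharP cardF).
exact: det_tutte_matchings two0 small.
Qed.
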